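(* Let $a>0$, $b,c\ge 0$, and consider the system $$\dot x=x(1-y+cx-axz),\qquad \dot y=y(-1+x),\qquad \dot z=z(-b+ax^2).$$ Let $f$ be an irreducible Darboux polynomial of degree greater than one with cofactor $K=\alpha_2y$, $\alpha_2\in\mathbb{C}$. Then $\alpha_2=0$.
   Context: A Darboux polynomial is $f\in\mathbb{C}[x,y,z]$ with $x(1-y+cx-axz)f_x+y(-1+x)f_y+z(-b+ax^2)f_z=Kf$ for a polynomial cofactor $K$ of degree at most two. *)

From HB Require Import structures.
From mathcomp Require Import all_boot all_order all_algebra.
From mathcomp Require Import reals.
From mathcomp Require Import complex.
From mathcomp Require Import mpoly.

Set Implicit Arguments.
Unset Strict Implicit.
Unset Printing Implicit Defensive.

Import Order.TTheory GRing.Theory Num.Theory.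
Local Open Scope ring_scope.

Section Darboux.
Variable R : realType.

Definition cpoly3 := {mpoly R[i][3]}.

Definition vx : 'I_3 := @Ordinal 3 0 isT.
Definition vy : 'I_3 := @Ordinal 3 1 isT.
Definition vz : 'I_3 := @Ordinal 3 2 isT.

Definition rconst (r : R) : cpoly3 := (Complex r 0)%:MP.

(* total degree of a multivariate polynomial (msize p = 1 + degree) *)
Definition mtotdeg (p : cpoly3) : nat := (msize p).-1.

Definition vfield (a b c : R) (f : cpoly3) : cpoly3 :=
  let x := 'X_vx in let y := 'X_vy in let z := 'X_vz in
  x * (1 - y + rconst c * x - rconst a * x * z) * mderiv vx f
  + y * (-1 + x) * mderiv vy f
  + z * (- rconst b + rconst a * x ^+ 2) * mderiv vz f.

Definition darboux_cofactor (a b c : R) (f K : cpoly3) : Prop :=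
  (mtotdeg K <= 2)%N /\ vfield a b c f = K * f.

Definition irreducible_mpoly (f : cpoly3) : Prop :=
  f != 0 /\ f \isn't a GRing.unit /\
  forall g h : cpoly3, f = g * h -> g \is a GRing.unit \/ h \is a GRing.unit.

End Darboux.

From HB Require Import structures.
From mathcomp Require Import all_boot all_order all_algebra.
From mathcomp Require Import reals.
From mathcomp Require Import complex.
From mathcomp Require Import mpoly.
From mathcomp Require Import ring zify.

Set Implicit Arguments.
Unset Strict Implicit.
Unset Printing Implicit Defensive.
Import Order.TTheory GRing.Theory Num.Theory.
Local Open Scope ring_scope.

(* On the plane x = 0 the vector field reduces to -y d/dy - b z d/dz, which acts
   diagonally on monomials.  Comparing the coefficients of y m and m (m free of x)
   in X(f) = alpha y f gives alpha f_m = -(m_y + 1 + b m_z) f_(y m), so when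
   alpha <> 0 the x-free part of f vanishes by descending induction on the degree:
   x divides f, which contradicts irreducibility in degree > 1. *)

Section MpolyVariable.
Variables (n : nat) (K : comNzRingType).
Implicit Types (p : {mpoly K[n]}) (m : 'X_{1..n}) (i j : 'I_n).

Lemma mnm1_le i m : m i != 0%N -> (U_(i) <= m)%MM.
Proof.
by move=> nz_mi; apply/mnm_lepP => j; rewrite mnm1E; case: eqP => [<-|_]; lia.
Qed.

Lemma mcoeffMXi p i m :
  (p * 'X_i)@_m = if m i == 0%N then 0 else p@_(m - U_(i)).
Proof.
case: eqP => [mi0|/eqP nz_mi]; last first.
  by rewrite -{1}(submK (mnm1_le nz_mi)) addmC mcoeffMX.
apply/eqP; rewrite mcoeff_eq0; apply/negP => m_supp.
have /mapP [m' _ mE] : m \in [seq (U_(i) + m')%MM | m' <- msupp p].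
  by rewrite -(perm_mem (msuppMX p U_(i))).
by rewrite mE mnmDE mnm1E eqxx in mi0.
Qed.

Lemma mcoeff_mderivMX p i m : (mderiv i p * 'X_i)@_m = p@_m *+ m i.
Proof.
rewrite mcoeffMXi; case: eqP => [->|/eqP nz_mi]; first by rewrite mulr0n.
rewrite mcoeff_mderiv submK ?mnm1_le // mnmBE mnm1E eqxx.
by congr (_ *+ _); lia.
Qed.

Lemma mcoeff_eq0_by_shift p i j : i != j ->
  (forall m, m i = 0%N -> p@_(m + U_(j)) = 0 -> p@_m = 0) ->
  forall m, m i = 0%N -> p@_m = 0.
Proof.
move=> neq_ij shift m mi0.
suff: forall k m, m i = 0%N -> (msize p <= mdeg m + k)%N -> p@_m = 0.
  by apply=> //; apply: leq_addl.
elim=> [|k IHk] {mi0}m mi0 le_p_mk.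
  by apply/memN_msupp_eq0/msize_mdeg_ge; rewrite -(addn0 (mdeg m)).
apply: shift => //; apply: IHk.
  by rewrite mnmDE mnm1E eq_sym (negbTE neq_ij) mi0.
by rewrite mdegD mdeg1 -addnA add1n.
Qed.

Lemma mpoly_dvdX p i : (forall m, m i = 0%N -> p@_m = 0) ->
  exists q, p = q * 'X_i.
Proof.
move=> coef0; exists (\sum_(m <- msupp p) p@_m *: 'X_[m - U_(i)]).
rewrite {1}(mpolyE p) mulr_suml !big_seq; apply: eq_bigr => m m_supp.
rewrite -scalerAl -mpolyXD submK // mnm1_le //.
by apply: contraTneq m_supp => mi0; rewrite mcoeff_msupp coef0 ?eqxx.
Qed.

End MpolyVariable.

Section Darboux.
Variables (R : realType) (a b c : R).
Implicit Types (f : cpoly3 R) (m : 'X_{1..3}).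

Lemma irreducible_mulX_mtotdeg f (h : cpoly3 R) i :
  irreducible_mpoly f -> f = h * 'X_i -> mtotdeg f = 1%N.
Proof.
move=> [nz_f [_ irr_f]] fE.
have nz_h : h != 0 by apply: contraNneq nz_f => h0; rewrite fE h0 mul0r.
case: (irr_f _ _ fE) => [/andP [/eqP hC _] | /andP [/eqP XC _]].
  have nz_h0 : h@_0 != 0 by apply: contraNneq nz_h => h00; rewrite hC h00.
  by rewrite /mtotdeg fE hC mul_mpolyC msizeZ // msizeX mdeg1.
have := congr1 (mcoeff U_(i)) XC.
by rewrite mcoeffX mcoeffC eqxx mnm1_eq0 mulr0 => /eqP; rewrite oner_eq0.
Qed.

Lemma mcoeff_vfield_xfree f m : m vx = 0%N ->
  (vfield a b c f)@_m = - (f@_m *+ m vy + Complex b 0 * f@_m *+ m vz).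
Proof.
move=> mx0.
pose Q := (1 - 'X_vy + rconst c * 'X_vx - rconst a * 'X_vx * 'X_vz) * mderiv vx f
  + 'X_vy * mderiv vy f + rconst a * 'X_vx * 'X_vz * mderiv vz f.
have -> : vfield a b c f =
    Q * 'X_vx - mderiv vy f * 'X_vy - rconst b * (mderiv vz f * 'X_vz).
  by rewrite /vfield /Q; ring.
rewrite !mcoeffB mcoeffMXi mx0 eqxx /rconst mcoeffCM !mcoeff_mderivMX.
by rewrite sub0r opprD mulrnAr.
Qed.

Lemma darboux_ycofactor_shift (alpha : R[i]) f m :
  vfield a b c f = alpha%:MP * 'X_vy * f -> m vx = 0%N ->
  alpha * f@_m =
  - (f@_(m + U_(vy)) *+ (m vy).+1 + Complex b 0 * f@_(m + U_(vy)) *+ m vz).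
Proof.
move=> Df mx0; have := congr1 (mcoeff (m + U_(vy))) Df.
rewrite -mulrA mcoeffCM ['X_vy * f]mulrC mcoeffMXi addmK mcoeff_vfield_xfree;
  by rewrite ?mnmDE ?mnm1E ?mx0 //= addn0 addn1 => ->.
Qed.

Lemma darboux_ycofactor_xfree_eq0 (alpha : R[i]) f :
  alpha != 0 -> vfield a b c f = alpha%:MP * 'X_vy * f ->
  forall m, m vx = 0%N -> f@_m = 0.
Proof.
move=> nz_alpha Df; apply: (@mcoeff_eq0_by_shift _ _ f vx vy) => // m mx0 f0.
have := darboux_ycofactor_shift Df mx0.
rewrite f0 mulr0 !mul0rn addr0 oppr0 => /eqP.
by rewrite mulf_eq0 (negbTE nz_alpha) => /eqP.
Qed.

End Darboux.

Theorem lemma4p4 (R : realType) (a b c : R) (alpha2 : R[i]) (f : cpoly3 R) :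
  0 < a -> 0 <= b -> 0 <= c ->
  irreducible_mpoly f -> (1 < mtotdeg f)%N ->
  darboux_cofactor a b c f (alpha2%:MP * 'X_vy) ->
  alpha2 = 0.
Proof.
move=> _ _ _ irr_f deg_f [_ Df]; have [// | nz_alpha] := eqVneq alpha2 0.
have [h fE] := mpoly_dvdX (darboux_ycofactor_xfree_eq0 nz_alpha Df).
by move: deg_f; rewrite (irreducible_mulX_mtotdeg irr_f fE).
Qed.
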